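(* Let $\sigma=\begin{pmatrix}\frac13&0\\0&\frac23\end{pmatrix}$. There exists an extreme point of the convex set $\mathcal{CP}(M_2,M_2;\sigma,\sigma)$ of Kraus rank $2$.
   Context: $M_n$ denotes the complex $n\times n$ matrices. For positive semidefinite $A\in M_{d_1}$, $B\in M_{d_2}$, $\mathcal{CP}(M_{d_1},M_{d_2};A,B)$ is the convex set of completely positive maps $\Phi:M_{d_1}\to M_{d_2}$ with $\Phi(I_{d_1})=B$ and $\Phi^*(I_{d_2})=A$ ($\Phi^*$ the Hilbert–Schmidt adjoint); equivalently $\Phi(X)=\sum_iK_iXK_i^\dagger$ with $\sum_iK_i^\dagger K_i=A$, $\sum_iK_iK_i^\dagger=B$. An extreme point of a convex set $\mathcal{K}$ is an element not expressible as $t\Phi_1+(1-t)\Phi_2$ with $t\in(0,1)$ and distinct $\Phi_1,\Phi_2\in\mathcal{K}$. The Kraus rank of a completely positive map is the minimal number of Kraus operators in a Kraus decomposition (equal to the rank of its Choi matrix). *)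

From HB Require Import structures.
From mathcomp Require Import all_boot all_order all_algebra.
From mathcomp Require Import complex.
From mathcomp Require Import reals.
Set Implicit Arguments. Unset Strict Implicit. Unset Printing Implicit Defensive.
Import Order.TTheory GRing.Theory Num.Theory.
Local Open Scope ring_scope.
Local Open Scope complex_scope.

Section QChannels.
Variable R : realType.
Local Notation C := R[i].

Definition adjmx m n (A : 'M[C]_(m, n)) : 'M[C]_(n, m) := (map_mx (@conjc R) A)^T.

Definition has_kraus d1 d2 (Phi : 'M[C]_d1 -> 'M[C]_d2) (n : nat) : Prop :=
  exists K : 'I_n -> 'M[C]_(d2, d1),
    forall X : 'M[C]_d1, Phi X = \sum_(i < n) (K i *m X *m adjmx (K i)).

Definition completely_positive d1 d2 (Phi : 'M[C]_d1 -> 'M[C]_d2) : Prop :=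
  exists n, has_kraus Phi n.

Definition hs_adjoint d1 d2 (Phi : 'M[C]_d1 -> 'M[C]_d2)
  (Psi : 'M[C]_d2 -> 'M[C]_d1) : Prop :=
  forall X Y, \tr (adjmx (Psi Y) *m X) = \tr (adjmx Y *m Phi X).

Definition CPset d1 d2 (A : 'M[C]_d1) (B : 'M[C]_d2)
  (Phi : 'M[C]_d1 -> 'M[C]_d2) : Prop :=
  [/\ completely_positive Phi, Phi 1%:M = B &
      exists Psi, hs_adjoint Phi Psi /\ Psi 1%:M = A].

Definition extreme_point d1 d2 (K : ('M[C]_d1 -> 'M[C]_d2) -> Prop)
  (Phi : 'M[C]_d1 -> 'M[C]_d2) : Prop :=
  K Phi /\
  ~ (exists (t : R) (Phi1 Phi2 : 'M[C]_d1 -> 'M[C]_d2),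
        [/\ 0 < t < 1, K Phi1, K Phi2, Phi1 <> Phi2 &
            Phi = (fun X => t%:C *: Phi1 X + (1 - t)%:C *: Phi2 X)]).

Definition kraus_rank_is d1 d2 (Phi : 'M[C]_d1 -> 'M[C]_d2) (r : nat) : Prop :=
  has_kraus Phi r /\ forall m, has_kraus Phi m -> (r <= m)%N.

Definition sigma : 'M[C]_2 :=
  \matrix_(i < 2, j < 2)
    (if (i == j) then (if (val i == 0%N) then (3%:R^-1)%:C else (2%:R / 3%:R)%:C)
     else 0).

End QChannels.

(* Both Kraus operators of Phi, (1/3) diag(1,2) and ((1+i)/3) swap, lie in the
   plane S spanned by diag(1,2) and the swap matrix.  S is cut out by two linear
   functionals w, and for a CP map F with Kraus operators K_j the number
   sum_j |w(K_j)|^2 is a value of the quadratic form of the Choi matrix of F: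
   it is linear in F, nonnegative, and zero at Phi.  So if Phi = t F1 + (1-t) F2,
   all Kraus operators of F1 and F2 lie in S.  A CP map with Kraus operators in S
   is determined by the 2x2 Gram matrix of their coordinates, and F(I) = sigma
   forces that Gram matrix to be diag(1/9, 2/9); hence F1 = F2 = Phi.
   Phi has Kraus rank 2 because Phi(I) <> 0 and its Choi matrix has a nonzero
   2x2 minor. *)

From mathcomp Require Import all_boot all_order all_algebra.
From mathcomp Require Import complex reals boolp ring.
Set Implicit Arguments. Unset Strict Implicit. Unset Printing Implicit Defensive.
Import Order.TTheory GRing.Theory Num.Theory.
Local Open Scope ring_scope.
Local Open Scope complex_scope.

Lemma big_ord2 (V : nmodType) (F : 'I_2 -> V) :
  \sum_(i < 2) F i = F ord0 + F ord_max.
Proof. by rewrite big_ord_recl big_ord1; congr (_ + F _); exact: val_inj. Qed.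

Lemma pos_comb_eq0 (T : numDomainType) (s t x y : T) :
  0 < s -> 0 < t -> 0 <= x -> 0 <= y -> s * x + t * y = 0 -> x = 0 /\ y = 0.
Proof.
move=> s0 t0 x0 y0 /eqP; rewrite paddr_eq0 ?mulr_ge0 ?(ltW s0) ?(ltW t0) //.
by rewrite !mulf_eq0 (gt_eqF s0) (gt_eqF t0) => /andP[/eqP-> /eqP->].
Qed.

Section KrausMaps.
Variable R : realType.
Local Notation C := R[i].

Lemma adjmxE m n (A : 'M[C]_(m, n)) i j : adjmx A i j = (A j i)^*%C.
Proof. by rewrite !mxE. Qed.

Lemma adjmxK m n (A : 'M[C]_(m, n)) : adjmx (adjmx A) = A.
Proof. by apply/matrixP => i j; rewrite !adjmxE conjcK. Qed.

Lemma adjmxD m n (A B : 'M[C]_(m, n)) : adjmx (A + B) = adjmx A + adjmx B.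
Proof. by rewrite /adjmx map_mxD linearD. Qed.

Lemma adjmxZ m n c (A : 'M[C]_(m, n)) : adjmx (c *: A) = c^*%C *: adjmx A.
Proof. by rewrite /adjmx map_mxZ linearZ. Qed.

Lemma adjmxM m n p (A : 'M[C]_(m, n)) (B : 'M[C]_(n, p)) :
  adjmx (A *m B) = adjmx B *m adjmx A.
Proof. by rewrite /adjmx map_mxM trmx_mul. Qed.

Lemma adjmx_sum m n k (A : 'I_k -> 'M[C]_(m, n)) :
  adjmx (\sum_j A j) = \sum_j adjmx (A j).
Proof. by rewrite /adjmx map_mx_sum raddf_sum. Qed.

Definition kraus_map d1 d2 n (L : 'I_n -> 'M[C]_(d2, d1)) (X : 'M[C]_d1) :=
  \sum_j L j *m X *m adjmx (L j).

Lemma kraus_map_hs_adjoint d1 d2 n (L : 'I_n -> 'M[C]_(d2, d1)) :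
  hs_adjoint (kraus_map L) (kraus_map (fun j => adjmx (L j))).
Proof.
move=> X Y; rewrite /kraus_map adjmx_sum mulmx_suml mulmx_sumr !raddf_sum /=.
apply: eq_bigr => j _; rewrite !adjmxM !adjmxK -!mulmxA mxtrace_mulC.
by rewrite -!mulmxA.
Qed.

Lemma conj_mx_entry m n (A B : 'M[C]_(m, n)) X a b :
  (A *m X *m adjmx B) a b = \sum_k \sum_l A a k * X k l * (B b l)^*%C.
Proof.
rewrite mxE; under eq_bigr => l _ do rewrite adjmxE mxE mulr_suml.
exact: exchange_big.
Qed.

Lemma conj_delta_mx_entry m n (A B : 'M[C]_(m, n)) k l a b :
  (A *m delta_mx k l *m adjmx B) a b = A a k * (B b l)^*%C.
Proof.
rewrite conj_mx_entry (bigD1 k) //= [X in _ + X]big1 ?addr0 => [|k' k'k].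
  rewrite (bigD1 l) //= big1 ?addr0 => [|l' l'l]; first by rewrite mxE !eqxx mulr1.
  by rewrite mxE (negbTE l'l) andbF mulr0 mul0r.
by rewrite big1 // => l' _; rewrite mxE (negbTE k'k) mulr0 mul0r.
Qed.

Lemma conj_mxZ m n c (A : 'M[C]_(m, n)) X :
  (c *: A) *m X *m adjmx (c *: A) = (c * c^*%C) *: (A *m X *m adjmx A).
Proof. by rewrite adjmxZ -!scalemxAl -scalemxAr scalerA. Qed.


Lemma kraus_map_delta_entry d1 d2 n (L : 'I_n -> 'M[C]_(d2, d1)) k l a b :
  kraus_map L (delta_mx k l) a b = \sum_j L j a k * (L j b l)^*%C.
Proof. by rewrite summxE; apply: eq_bigr => j _; rewrite conj_delta_mx_entry. Qed.

Lemma has_kraus_kraus_map d1 d2 n (F : 'M[C]_d1 -> 'M[C]_d2) :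
  has_kraus F n -> exists L : 'I_n -> 'M[C]_(d2, d1), F = kraus_map L.
Proof. by case=> L HL; exists L; apply: funext. Qed.

Lemma kraus1_choi_minor d1 d2 (F : 'M[C]_d1 -> 'M[C]_d2) (k l : 'I_d1) (a b : 'I_d2) :
  has_kraus F 1 ->
  F (delta_mx k k) a a * F (delta_mx l l) b b =
  F (delta_mx k l) a b * F (delta_mx l k) b a.
Proof.
by case/has_kraus_kraus_map=> L ->; rewrite !kraus_map_delta_entry !big_ord1; ring.
Qed.

Definition mx_pair m n (W L : 'M[C]_(m, n)) : C := \sum_a \sum_k W a k * L a k.

Definition choi_form d1 d2 (W : 'M[C]_(d2, d1)) (F : 'M[C]_d1 -> 'M[C]_d2) : C :=
  \sum_a \sum_b \sum_k \sum_l W a k * (W b l)^*%C * F (delta_mx k l) a b.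

Lemma mx_pair_normsqE m n (W L : 'M[C]_(m, n)) :
  mx_pair W L * (mx_pair W L)^*%C =
  \sum_a \sum_b \sum_k \sum_l W a k * (W b l)^*%C * (L a k * (L b l)^*%C).
Proof.
rewrite rmorph_sum big_distrlr; apply: eq_bigr => a _; apply: eq_bigr => b _.
rewrite rmorph_sum big_distrlr; apply: eq_bigr => k _; apply: eq_bigr => l _.
by rewrite rmorphM mulrACA.
Qed.

Lemma choi_form_kraus d1 d2 n (W : 'M[C]_(d2, d1)) (L : 'I_n -> 'M[C]_(d2, d1)) :
  choi_form W (kraus_map L) = \sum_j mx_pair W (L j) * (mx_pair W (L j))^*%C.
Proof.
under [RHS]eq_bigr => j _ do rewrite mx_pair_normsqE.
rewrite [RHS]exchange_big; apply: eq_bigr => a _.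
rewrite [RHS]exchange_big; apply: eq_bigr => b _.
rewrite [RHS]exchange_big; apply: eq_bigr => k _.
rewrite [RHS]exchange_big; apply: eq_bigr => l _.
by rewrite kraus_map_delta_entry mulr_sumr.
Qed.

Lemma choi_formD d1 d2 (W : 'M[C]_(d2, d1)) (F1 F2 : 'M[C]_d1 -> 'M[C]_d2) c1 c2 :
  choi_form W (fun X => c1 *: F1 X + c2 *: F2 X) =
  c1 * choi_form W F1 + c2 * choi_form W F2.
Proof.
rewrite /choi_form; do 4!(rewrite !mulr_sumr -big_split; apply: eq_bigr => ? _).
by rewrite !mxE mulrDr [_ * (c1 * _)]mulrCA [_ * (c2 * _)]mulrCA.
Qed.

Lemma sum_normsq_ge0 n (z : 'I_n -> C) : 0 <= \sum_j z j * (z j)^*%C.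
Proof. by apply: sumr_ge0 => j _; exact: mulcJ_ge0. Qed.

Lemma sum_normsq_eq0 n (z : 'I_n -> C) :
  \sum_j z j * (z j)^*%C = 0 -> forall j, z j = 0.
Proof.
move=> sum0 j.
have /eqP := @psumr_eq0P _ _ xpredT _ (fun i _ => mulcJ_ge0 (z i)) sum0 j isT.
by rewrite mulf_eq0 conjc_eq0 orbb => /eqP.
Qed.

Lemma choi_form_cp_ge0 d1 d2 (W : 'M[C]_(d2, d1)) F :
  completely_positive F -> 0 <= choi_form W F.
Proof.
by case=> n /has_kraus_kraus_map [L ->]; rewrite choi_form_kraus sum_normsq_ge0.
Qed.

Lemma choi_form_convex_eq0 d1 d2 (W : 'M[C]_(d2, d1)) F1 F2 (t : R) :
  0 < t < 1 -> completely_positive F1 -> completely_positive F2 ->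
  choi_form W (fun X => t%:C *: F1 X + (1 - t)%:C *: F2 X) = 0 ->
  choi_form W F1 = 0 /\ choi_form W F2 = 0.
Proof.
move=> /andP[t0 t1] cp1 cp2; rewrite choi_formD; apply: pos_comb_eq0.
- by rewrite ltcR.
- by rewrite ltcR subr_gt0.
- exact: choi_form_cp_ge0.
- exact: choi_form_cp_ge0.
Qed.

Definition gram2_map m n (A B : 'M[C]_(m, n)) (P Z W Q : C) (X : 'M[C]_n) :=
  P *: (A *m X *m adjmx A) + Z *: (A *m X *m adjmx B)
  + W *: (B *m X *m adjmx A) + Q *: (B *m X *m adjmx B).

Lemma kraus_map_span2 m n k (A B : 'M[C]_(m, n)) (p q : 'I_k -> C) :
  kraus_map (fun j => p j *: A + q j *: B) =
  gram2_map A B (\sum_j p j * (p j)^*%C) (\sum_j p j * (q j)^*%C)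
                (\sum_j q j * (p j)^*%C) (\sum_j q j * (q j)^*%C).
Proof.
apply: funext => X; rewrite /gram2_map !scaler_suml -!big_split.
apply: eq_bigr => j _; rewrite adjmxD !adjmxZ !mulmxDl !mulmxDr.
by rewrite -!scalemxAl -!scalemxAr !scalerA !addrA.
Qed.

Lemma kraus_map2_scaled m n (A B : 'M[C]_(m, n)) c d :
  kraus_map (fun j : 'I_2 => if j == ord0 then c *: A else d *: B) =
  gram2_map A B (c * c^*%C) 0 0 (d * d^*%C).
Proof.
apply: funext => X; rewrite /kraus_map big_ord2 /= !conj_mxZ.
by rewrite /gram2_map !scale0r !addr0.
Qed.

End KrausMaps.

Section ExtremeChannel.
Variable R : realType.
Local Notation C := R[i].
Local Notation i0 := (@ord0 1).
Local Notation i1 := (@ord_max 1).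
Arguments conjc : simpl never.

Lemma ord2P (a : 'I_2) : a = i0 \/ a = i1.
Proof. by case: a => [[|[|//]] lt_a2]; [left | right]; exact: val_inj. Qed.

Definition diag12 : 'M[C]_2 := \matrix_(i, j) (if i == j then (i.+1)%:R else 0).
Definition swapmx : 'M[C]_2 := \matrix_(i, j) (if i == j then 0 else 1).

Lemma adjmx_diag12 : adjmx diag12 = diag12.
Proof.
apply/matrixP => a b; rewrite !mxE.
by case: (eqVneq a b) => [->|_]; rewrite ?conjc_nat ?conjc0.
Qed.

Lemma adjmx_swapmx : adjmx swapmx = swapmx.
Proof.
apply/matrixP => a b; rewrite !mxE.
by case: (eqVneq a b); rewrite ?conjc0 ?conjc1.
Qed.

Lemma gram2_map1 P Z W Q : let G := gram2_map diag12 swapmx P Z W Q 1%:M in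
  [/\ G i0 i0 = P + Q, G i0 i1 = Z + 2 * W, G i1 i0 = 2 * Z + W & G i1 i1 = 4 * P + Q].
Proof.
rewrite /= /gram2_map !mulmx1 adjmx_diag12 adjmx_swapmx.
by rewrite !mxE !big_ord2 !mxE /=; split; ring.
Qed.

Lemma sigmaE a b : sigma R a b =
  if a == b then (if val a == 0%N then 3^-1 else 2 / 3) else 0.
Proof.
rewrite mxE; case: (a == b) => //; case: (val a == 0%N) => //.
  by rewrite fmorphV rmorph_nat.
by rewrite rmorphM fmorphV !rmorph_nat.
Qed.

Lemma gram2_map1_sigma P Z W Q :
  gram2_map diag12 swapmx P Z W Q 1%:M = sigma R ->
  [/\ P = 9^-1, Z = 0, W = 0 & Q = 2 / 9].
Proof.
move=> /matrixP G; have [] := gram2_map1 P Z W Q.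
rewrite /= !G !sigmaE /= => e00 e01 e10 e11.
have eP : P = 9^-1.
  have -> : P = ((4 * P + Q) - (P + Q)) / 3 by field.
  by rewrite -e00 -e11; field.
have eZ : Z = 0.
  have -> : Z = (2 * (2 * Z + W) - (Z + 2 * W)) / 3 by field.
  by rewrite -e01 -e10; field.
have eW : W = 0.
  have -> : W = (2 * (Z + 2 * W) - (2 * Z + W)) / 3 by field.
  by rewrite -e01 -e10; field.
split => //; have -> : Q = (P + Q) - P by ring.
by rewrite -e00 eP; field.
Qed.

(* (1 + i)/3 has squared modulus 2/9 without requiring a square root. *)
Definition alpha : C := Complex 3^-1 3^-1.

Definition phi_kraus (j : 'I_2) : 'M[C]_2 :=
  if j == i0 then 3^-1 *: diag12 else alpha *: swapmx.

Definition Phi : 'M[C]_2 -> 'M[C]_2 := kraus_map phi_kraus.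

Lemma alpha_normsq : alpha * alpha^*%C = 2 / 9.
Proof.
have -> : 2 / 9 = (2 / 9 : R)%:C by rewrite rmorphM fmorphV !rmorph_nat.
by apply/eqP; rewrite eq_complex /=; apply/andP; split; apply/eqP; field.
Qed.

Lemma third_normsq : (3^-1 : C) * (3^-1)^*%C = 9^-1.
Proof. by rewrite conjc_inv conjc_nat -invfM -natrM. Qed.

Lemma PhiE : Phi = gram2_map diag12 swapmx 9^-1 0 0 (2 / 9).
Proof. by rewrite /Phi kraus_map2_scaled third_normsq alpha_normsq. Qed.

Lemma Phi_hs_adjoint_self : hs_adjoint Phi Phi.
Proof.
have adjE : (fun j => adjmx (phi_kraus j)) =
            fun j => if j == i0 then (3^-1)^*%C *: diag12 else alpha^*%C *: swapmx.
  apply: funext => j; rewrite /phi_kraus.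
  by case: (j == i0); rewrite adjmxZ ?adjmx_diag12 ?adjmx_swapmx.
have := kraus_map_hs_adjoint phi_kraus.
rewrite adjE !kraus_map2_scaled !conjcK (mulrC (3^-1)^*%C) (mulrC alpha^*%C).
by rewrite third_normsq alpha_normsq -PhiE.
Qed.

Lemma Phi1 : Phi 1%:M = sigma R.
Proof.
have [e00 e01 e10 e11] := gram2_map1 9^-1 0 0 (2 / 9).
rewrite PhiE; apply/matrixP => a b.
case: (ord2P a) => ->; case: (ord2P b) => ->;
  by rewrite sigmaE /= ?e00 ?e01 ?e10 ?e11; field.
Qed.

Lemma Phi_CPset : CPset (sigma R) (sigma R) Phi.
Proof.
split; [by exists 2%N, phi_kraus | exact: Phi1 |].
by exists Phi; split; [exact: Phi_hs_adjoint_self | exact: Phi1].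
Qed.

Definition offdiag_weight : 'M[C]_2 :=
  \matrix_(a, k) (if a == k then 0 else if a == i0 then 1 else -1).

Definition diag_weight : 'M[C]_2 :=
  \matrix_(a, k) (if a == k then (if a == i0 then 2 else -1) else 0).

Lemma mx_pair_offdiag_weight (L : 'M[C]_2) :
  mx_pair offdiag_weight L = L i0 i1 - L i1 i0.
Proof. by rewrite /mx_pair !big_ord2 !mxE /=; ring. Qed.

Lemma mx_pair_diag_weight (L : 'M[C]_2) :
  mx_pair diag_weight L = 2 * L i0 i0 - L i1 i1.
Proof. by rewrite /mx_pair !big_ord2 !mxE /=; ring. Qed.

Lemma mx2_span (L : 'M[C]_2) : L i1 i0 = L i0 i1 -> L i1 i1 = 2 * L i0 i0 ->
  L = L i0 i0 *: diag12 + L i0 i1 *: swapmx.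
Proof.
move=> e10 e11; apply/matrixP => a b.
by case: (ord2P a) => ->; case: (ord2P b) => ->; rewrite !mxE /= ?e10 ?e11; ring.
Qed.

Lemma phi_kraus_span j :
  phi_kraus j i1 i0 = phi_kraus j i0 i1 /\ phi_kraus j i1 i1 = 2 * phi_kraus j i0 i0.
Proof. by case: (ord2P j) => ->; rewrite /phi_kraus /= !mxE /=; split; ring. Qed.

Lemma Phi_choi_form0 :
  choi_form offdiag_weight Phi = 0 /\ choi_form diag_weight Phi = 0.
Proof.
rewrite /Phi !choi_form_kraus.
split; apply: big1 => j _; have [e10 e11] := phi_kraus_span j.
  by rewrite mx_pair_offdiag_weight e10 subrr mul0r.
by rewrite mx_pair_diag_weight e11 subrr mul0r.
Qed.

Lemma span_kraus_map_eq_Phi n (L : 'I_n -> 'M[C]_2) :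
  (forall j, L j = L j i0 i0 *: diag12 + L j i0 i1 *: swapmx) ->
  kraus_map L 1%:M = sigma R -> kraus_map L = Phi.
Proof.
move=> /funext ->; rewrite kraus_map_span2 => /gram2_map1_sigma[-> -> -> ->].
by rewrite PhiE.
Qed.

Lemma CPset_choi_form0_eq_Phi F : CPset (sigma R) (sigma R) F ->
  choi_form offdiag_weight F = 0 -> choi_form diag_weight F = 0 -> F = Phi.
Proof.
case=> [[n /has_kraus_kraus_map[L ->]] L1 _].
rewrite !choi_form_kraus => /sum_normsq_eq0 off0 /sum_normsq_eq0 diag0.
apply: span_kraus_map_eq_Phi L1 => j.
apply: mx2_span; apply/eqP; rewrite eq_sym -subr_eq0.
  by rewrite -mx_pair_offdiag_weight off0.
by rewrite -mx_pair_diag_weight diag0.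
Qed.

Lemma Phi_extreme : extreme_point (CPset (sigma R) (sigma R)) Phi.
Proof.
split; first exact: Phi_CPset.
case=> t [F1 [F2 [t01 cp1 cp2 F12 Phi_comb]]]; apply: F12.
have face W : choi_form W Phi = 0 -> choi_form W F1 = 0 /\ choi_form W F2 = 0.
  by rewrite Phi_comb; apply: choi_form_convex_eq0 => //; [case: cp1 | case: cp2].
have [off0 diag0] := Phi_choi_form0.
have [[off1 off2] [diag1 diag2]] := (face _ off0, face _ diag0).
rewrite (CPset_choi_form0_eq_Phi cp1 off1 diag1).
by rewrite (CPset_choi_form0_eq_Phi cp2 off2 diag2).
Qed.

Lemma Phi_kraus_rank : kraus_rank_is Phi 2.
Proof.
split; first by exists phi_kraus.
case=> [|[|m]] // kr.
- have [L PhiL] := has_kraus_kraus_map kr.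
  have := Phi1; rewrite PhiL => /matrixP/(_ i0 i0).
  by rewrite summxE big_ord0 sigmaE /= => /eqP; rewrite eq_sym invr_eq0 pnatr_eq0.
- have := kraus1_choi_minor i0 i1 i0 i0 kr.
  rewrite /Phi !kraus_map_delta_entry !big_ord2 /phi_kraus /= !mxE /=.
  rewrite !(mulr0, mul0r, mulr1, conjc0, addr0, add0r) third_normsq alpha_normsq.
  by move=> /eqP; rewrite !mulf_eq0 !invr_eq0 !pnatr_eq0.
Qed.

End ExtremeChannel.

Theorem mainTheorem7 (R : realType) :
  exists Phi : 'M[R[i]]_2 -> 'M[R[i]]_2,
    extreme_point (CPset (sigma R) (sigma R)) Phi /\ kraus_rank_is Phi 2.
Proof. by exists (@Phi R); split; [exact: Phi_extreme | exact: Phi_kraus_rank]. Qed.
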